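(* For every integer $n\geq 1$, the polynomial $Q_n(x,y,z,t)$ satisfies the identity of polynomials $$Q_n(x,y,z,t)=Q_n(x+nz+nt,\,y,\,-t,\,-z).$$
   Context: The polynomials $Q_n=Q_n(x,y,z,t)\in\mathbb{Z}[x,y,z,t]$ are defined by $Q_1=1$ and, for $n\geq 1$, $$Q_{n+1}=\bigl[x+nz+(y+t)\bigl(n+y\,\partial_y\bigr)\bigr]Q_n,$$ where $\partial_y$ denotes partial differentiation with respect to $y$. *)

From mathcomp Require Import all_boot all_order all_algebra.
From mathcomp Require Import mpoly.
Set Implicit Arguments. Unset Strict Implicit. Unset Printing Implicit Defensive.
Import GRing.Theory.
Local Open Scope ring_scope.

Definition vx : 'I_4 := inord 0.
Definition vy : 'I_4 := inord 1.
Definition vz : 'I_4 := inord 2.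
Definition vt : 'I_4 := inord 3.

Definition PX : {mpoly int[4]} := 'X_vx.
Definition PY : {mpoly int[4]} := 'X_vy.
Definition PZ : {mpoly int[4]} := 'X_vz.
Definition PT : {mpoly int[4]} := 'X_vt.

Definition Qstep (n : nat) (P : {mpoly int[4]}) : {mpoly int[4]} :=
  (PX + PZ *+ n) * P + (PY + PT) * (P *+ n + PY * (P ^`M (vy))).

(* Qaux k = Q_{k+1}. *)
Fixpoint Qaux (k : nat) : {mpoly int[4]} :=
  match k with
  | 0 => 1
  | k'.+1 => Qstep k'.+1 (Qaux k')
  end.

(* Q n = Q_n for n >= 1 (Q 0 is a dummy value, never used). *)
Definition Q (n : nat) : {mpoly int[4]} := Qaux n.-1.

From mathcomp Require Import all_boot all_order all_algebra.
From mathcomp Require Import mpoly ring.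
Import GRing.Theory.
Local Open Scope ring_scope.

(* Write f^s for the substitution of s into f, sigma_n for
   (x,y,z,t) |-> (x+nz+nt, y, -t, -z) and tau (shiftX) for x |-> x+z+t, so that
   f^sigma_(n+1) = (f^sigma_n)^tau.  Both substitutions fix y and leave the other
   variables y-free, so they commute with d/dy; hence sigma_(n+1) conjugates the
   step operator M_n = x+nz+(y+t)(n+y d/dy) into
   N_n = x+(n+1)z+t+(y-z)(n+y d/dy) (Qstep_conj n),
   while tau conjugates M_n into M_n+z+t.  A direct computation gives
   M_(n+1) N_n = N_(n+1) (M_n+z+t), whence Q_(n+1) = N_n (Q_n^tau) by induction.
   If Q_n is sigma_n-invariant, then
     Q_(n+1)^sigma_(n+1) = N_n (Q_n^sigma_(n+1)) = N_n ((Q_n^sigma_n)^tau)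
                         = N_n (Q_n^tau) = Q_(n+1). *)

Section MPolyRing.
Variables (R : nzRingType) (n : nat).

Lemma mpoly_ringind (P : {mpoly R[n]} -> Prop) :
  (forall c, P c%:MP) -> (forall i, P 'X_i) ->
  (forall p q, P p -> P q -> P (p + q)) ->
  (forall p q, P p -> P q -> P (p * q)) -> forall p, P p.
Proof.
move=> hC hX hD hM; elim/mpolyind => [|c m p _ _ Pp]; first by rewrite -mpolyC0.
apply: (hD _ _ _ Pp); rewrite -mul_mpolyC mpolyXE_id; apply: (hM) => //.
apply: big_ind => [||i _]; [by rewrite -mpolyC1 | exact: (hM) |].
by elim: (m i) => [|k IHk]; rewrite ?expr0 -?mpolyC1 // exprS; apply: (hM).
Qed.

Lemma mderivXU (i j : 'I_n) : 'X_i^`M(j) = (i == j)%:R :> {mpoly R[n]}.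
Proof.
rewrite mderivX mnm1E; case: eqP => [->|_]; last by rewrite scale0r.
by rewrite -{1}[U_(j)%MM]add0m addmK mpolyX0 scale1r.
Qed.

End MPolyRing.

Section MPolyComp.
Variables (R : comNzRingType) (n : nat).
Implicit Types (p : {mpoly R[n]}).

Lemma comp_mpolyA (k l : nat) p (lq : n.-tuple {mpoly R[k]}) (lr : k.-tuple {mpoly R[l]}) :
  (p \mPo lq) \mPo lr = p \mPo map_tuple (comp_mpoly lr) lq.
Proof.
elim/mpoly_ringind: p => [c|i|p q Hp Hq|p q Hp Hq].
- by rewrite !comp_mpolyC.
- by rewrite !comp_mpolyXU -!tnth_nth tnth_map.
- by rewrite !rmorphD /= Hp Hq.
- by rewrite !rmorphM /= Hp Hq.
Qed.

Lemma mderiv_comp_mpoly (lq : n.-tuple {mpoly R[n]}) j p :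
  (forall i, (tnth lq i)^`M(j) = 'X_i^`M(j)) ->
  (p \mPo lq)^`M(j) = p^`M(j) \mPo lq.
Proof.
move=> lqX; elim/mpoly_ringind: p => [c|i|p q Hp Hq|p q Hp Hq].
- by rewrite comp_mpolyC !mderivC comp_mpoly0.
- by rewrite comp_mpolyXU -tnth_nth lqX mderivXU rmorph_nat.
- by rewrite !(rmorphD, mderivD) /= Hp Hq.
- by rewrite !(rmorphM, mderivM, rmorphD) /= Hp Hq.
Qed.

End MPolyComp.

Definition eulerY (n : nat) (p : {mpoly int[4]}) := p *+ n + PY * p^`M(vy).

Definition Qstep_conj (n : nat) (p : {mpoly int[4]}) :=
  (PX + PZ *+ n.+1 + PT) * p + (PY - PZ) * eulerY n p.

Definition sigma (n : nat) : 4.-tuple {mpoly int[4]} :=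
  [tuple PX + PZ *+ n + PT *+ n; PY; - PT; - PZ].

Definition shiftX (p : {mpoly int[4]}) := p \mPo [tuple PX + (PZ + PT); PY; PZ; PT].

Section Substitution.
Variables a b c d : {mpoly int[4]}.

Lemma comp_PX : PX \mPo [tuple a; b; c; d] = a.
Proof. by rewrite comp_mpolyXU /vx inordK. Qed.
Lemma comp_PY : PY \mPo [tuple a; b; c; d] = b.
Proof. by rewrite comp_mpolyXU /vy inordK. Qed.
Lemma comp_PZ : PZ \mPo [tuple a; b; c; d] = c.
Proof. by rewrite comp_mpolyXU /vz inordK. Qed.
Lemma comp_PT : PT \mPo [tuple a; b; c; d] = d.
Proof. by rewrite comp_mpolyXU /vt inordK. Qed.

Lemma comp_mpoly4A (lr : 4.-tuple {mpoly int[4]}) p :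
  (p \mPo [tuple a; b; c; d]) \mPo lr =
  p \mPo [tuple a \mPo lr; b \mPo lr; c \mPo lr; d \mPo lr].
Proof. by rewrite comp_mpolyA; congr comp_mpoly; apply: val_inj. Qed.

End Substitution.

Lemma mderivY_PX : PX^`M(vy) = 0. Proof. by rewrite mderivXU -val_eqE /= !inordK. Qed.
Lemma mderivY_PY : PY^`M(vy) = 1. Proof. by rewrite mderivXU eqxx. Qed.
Lemma mderivY_PZ : PZ^`M(vy) = 0. Proof. by rewrite mderivXU -val_eqE /= !inordK. Qed.
Lemma mderivY_PT : PT^`M(vy) = 0. Proof. by rewrite mderivXU -val_eqE /= !inordK. Qed.

Lemma var4P (i : 'I_4) : [\/ i = vx, i = vy, i = vz | i = vt].
Proof.
by case: i => -[|[|[|[|i]]]] lti //; [apply: Or41 | apply: Or42 | apply: Or43 | apply: Or44];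
  apply: val_inj; rewrite /= inordK.
Qed.

Lemma eulerY_comp (a c d : {mpoly int[4]}) n p :
  a^`M(vy) = 0 -> c^`M(vy) = 0 -> d^`M(vy) = 0 ->
  eulerY n (p \mPo [tuple a; PY; c; d]) = eulerY n p \mPo [tuple a; PY; c; d].
Proof.
move=> a0 c0 d0.
have pY : (p \mPo [tuple a; PY; c; d])^`M(vy) = p^`M(vy) \mPo [tuple a; PY; c; d].
  apply: mderiv_comp_mpoly => i; rewrite (tnth_nth 0) -comp_mpolyXU.
  case: (var4P i) => ->; rewrite -/PX -/PY -/PZ -/PT.
  - by rewrite comp_PX a0 mderivY_PX.
  - by rewrite comp_PY.
  - by rewrite comp_PZ c0 mderivY_PZ.
  - by rewrite comp_PT d0 mderivY_PT.
by rewrite /eulerY rmorphD rmorphMn rmorphM /= comp_PY pY.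
Qed.

Lemma comp_Qstep (a c d : {mpoly int[4]}) n p :
  a^`M(vy) = 0 -> c^`M(vy) = 0 -> d^`M(vy) = 0 ->
  let lq := [tuple a; PY; c; d] in
  Qstep n p \mPo lq = (a + c *+ n) * (p \mPo lq) + (PY + d) * eulerY n (p \mPo lq).
Proof.
move=> a0 c0 d0 lq; rewrite eulerY_comp // -/lq.
have -> : Qstep n p = (PX + PZ *+ n) * p + (PY + PT) * eulerY n p by [].
move: (eulerY n p) => e.
by rewrite !(rmorphD, rmorphM, rmorphMn) /= comp_PX comp_PY comp_PZ comp_PT.
Qed.

Lemma shiftX_Qstep n p : shiftX (Qstep n p) = Qstep n (shiftX p) + (PZ + PT) * shiftX p.
Proof.
rewrite /shiftX comp_Qstep ?mderivD ?mderivY_PX ?mderivY_PZ ?mderivY_PT ?addr0 //.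
by rewrite /Qstep -/(eulerY n _); ring.
Qed.

Lemma Qstep_conjE n p : Qstep n p \mPo sigma n.+1 = Qstep_conj n (p \mPo sigma n.+1).
Proof.
rewrite comp_Qstep
  ?(mderivD, mderivN, mderivMn, mderivY_PX, mderivY_PZ, mderivY_PT, mul0rn, addr0, oppr0) //.
rewrite -/(sigma n.+1) /Qstep_conj; move: (p \mPo _) => q.
by rewrite !mulrS; ring.
Qed.

Lemma Qstep_Qstep_conj n g :
  Qstep n.+1 (Qstep_conj n g) = Qstep_conj n.+1 (Qstep n g + (PZ + PT) * g).
Proof.
rewrite /Qstep /Qstep_conj /eulerY.
rewrite !(mderivD, mderivM, mderivMn, mderivN, mderivB).
rewrite mderivY_PX mderivY_PY mderivY_PZ mderivY_PT.
rewrite !mulrS; ring.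
Qed.

Lemma shiftX_comp_sigma n p : shiftX (p \mPo sigma n) = p \mPo sigma n.+1.
Proof.
rewrite /shiftX /sigma comp_mpoly4A !(rmorphD, rmorphN, rmorphMn) /=.
rewrite comp_PX comp_PY comp_PZ comp_PT !mulrS.
by congr comp_mpoly; apply: val_inj => /=; congr cons; ring.
Qed.

Lemma Qaux_shiftX k : Qaux k.+1 = Qstep_conj k.+1 (shiftX (Qaux k)).
Proof.
elim: k => [|k IHk].
  rewrite /= /shiftX comp_mpoly1 /Qstep /Qstep_conj /eulerY.
  by rewrite -mpolyC1 mderivC mpolyC1; ring.
by rewrite [shiftX _]shiftX_Qstep -Qstep_Qstep_conj -IHk.
Qed.

Lemma Qaux_sigma k : Qaux k \mPo sigma k.+1 = Qaux k.
Proof.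
elim: k => [|k IHk]; first exact: comp_mpoly1.
by rewrite -[Qaux k.+1]/(Qstep k.+1 (Qaux k)) Qstep_conjE -shiftX_comp_sigma IHk -Qaux_shiftX.
Qed.

Theorem theorem1p1 (n : nat) : (1 <= n)%N ->
  Q n = Q n \mPo [tuple PX + PZ *+ n + PT *+ n; PY; - PT; - PZ].
Proof. by case: n => // k _; rewrite /Q /= -[in LHS](Qaux_sigma k). Qed.
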